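(* Let $G=K(n_1,\dots,n_s)$ be a complete $s$-partite graph ($s\ge 2$) with parts $V_1,\dots,V_s$, $|V_j|=n_j$, and suppose at least one part has at least $6$ vertices. Then there exist an optimal $3$-relaxed coloring $f$ of $G$ and a part $V_j$ with $n_j\ge 6$ such that $|f(V_j)|=1$.
   Context: A map $f$ from $V(G)$ to a finite set of colors is a $3$-relaxed coloring if every vertex $u$ has at most $3$ neighbors $v$ with $f(v)=f(u)$; $\chi_3(G)$ is the minimum number of colors in such a coloring, and a $3$-relaxed coloring using $\chi_3(G)$ colors is optimal. $f(S)$ denotes the set of colors used on $S$. *)

From mathcomp Require Import all_boot.
Set Implicit Arguments. Unset Strict Implicit. Unset Printing Implicit Defensive.

Definition relaxed_coloring (T : finType) (e : rel T) (k : nat) (f : T -> nat) :=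
  forall u : T, #|[set v | e u v && (f v == f u)]| <= k.

Definition colors_on (T : finType) (f : T -> nat) (A : {set T}) : seq nat :=
  undup [seq f x | x <- enum A].

Definition ncolors (T : finType) (f : T -> nat) : nat := size (colors_on f setT).

Definition optimal_relaxed (T : finType) (e : rel T) (k : nat) (f : T -> nat) :=
  relaxed_coloring e k f /\
  forall g : T -> nat, relaxed_coloring e k g -> ncolors f <= ncolors g.

(* Complete s-partite graph K(n_1,...,n_s): vertices are pairs (j, i) with
   j : 'I_s the part and i : 'I_(n j) an index in the part. *)
Definition cmp_vertex (s : nat) (n : 'I_s -> nat) : finType :=
  {j : 'I_s & 'I_(n j)}.

Definition cmp_adj (s : nat) (n : 'I_s -> nat) : rel (cmp_vertex n) :=
  fun x y => tag x != tag y.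

Definition part (s : nat) (n : 'I_s -> nat) (j : 'I_s) : {set cmp_vertex n} :=
  [set x | tag x == j].

From mathcomp Require Import all_boot zify.
From Stdlib Require Import Classical Wf_nat.
Set Implicit Arguments. Unset Strict Implicit. Unset Printing Implicit Defensive.

(* Let f be an optimal 3-relaxed coloring, V a part with at least 6 vertices
   and M = f(V).  Color all of V with one c0 in M, give the vertices outside V
   that use colors of M new colors from M \ {c0}, and keep the other colors:
   no new color appears.  This works with unchanged colors if some c in M is
   unused outside V, and by merging two color classes if two colors of M are
   each used outside V inside a single part.  Otherwise every c in M is used
   at most 4 times in total, except for at most one color used at most 6
   times; as |V| >= 6, at most 4(|M| - 1) vertices outside V use colors of M,
   and they can be spread over M \ {c0} in groups of at most four. *)

Lemma colors_onP (T : finType) (f : T -> nat) (A : {set T}) c :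
  reflect (exists2 x, x \in A & c = f x) (c \in colors_on f A).
Proof.
rewrite mem_undup; apply: (iffP mapP) => -[x Ax ->]; exists x => //.
  by rewrite mem_enum in Ax.
by rewrite mem_enum.
Qed.

Lemma ncolors_le (T : finType) (f g : T -> nat) :
  (forall x, exists y, g x = f y) -> ncolors g <= ncolors f.
Proof.
move=> gf; apply: uniq_leq_size; first exact: undup_uniq.
move=> _ /colors_onP[x _ ->]; have [y ->] := gf x.
by apply/colors_onP; exists y; rewrite ?inE.
Qed.

Lemma size_colors_on_const (T : finType) (g : T -> nat) (A : {set T}) c :
  A != set0 -> {in A, forall x, g x = c} -> size (colors_on g A) = 1.
Proof.
case/set0Pn=> x0 Ax0 gA; apply: (@perm_size _ _ [:: c]).
apply: uniq_perm; rewrite ?undup_uniq // => d; rewrite inE.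
apply/colors_onP/eqP => [[x Ax ->]|->]; first exact: gA.
by exists x0; rewrite ?gA.
Qed.

Lemma optimal_relaxed_exists (T : finType) (e : rel T) k :
  irreflexive e -> exists f, optimal_relaxed e k f.
Proof.
move=> e_irr.
pose P N := exists2 f, relaxed_coloring e k f & ncolors f = N.
have inj_relaxed : relaxed_coloring e k (fun x => val (enum_rank x)).
  move=> u; apply: leq_trans (_ : #|@set0 T| <= k); last by rewrite cards0.
  apply/subset_leq_card/subsetP => v; rewrite !inE.
  by case/andP=> uv /eqP/val_inj/enum_rank_inj vu; rewrite vu e_irr in uv.
have [|N [[[f f_rel <-] f_min] _]] :=
  @dec_inh_nat_subset_has_unique_least_element P (fun N => classic (P N)).
  by exists (ncolors (fun x : T => val (enum_rank x))), (fun x => val (enum_rank x)).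
by exists f; split=> // g g_rel; apply/leP/f_min; exists g.
Qed.

Lemma card_fibers (T : finType) (R : eqType) (f : T -> R) (M : seq R) (S : {set T}) :
  uniq M -> {in S, forall x, f x \in M} ->
  #|S| = \sum_(c <- M) #|[set x in S | f x == c]|.
Proof.
move=> uM SM; rewrite -sum1_card.
transitivity (\sum_(x in S) \sum_(c <- M) (c == f x : nat)).
  apply: eq_bigr => x xS.
  by rewrite -big_mkcond /= sum1_count -/(count_mem (f x) M) count_uniq_mem // SM.
rewrite exchange_big /=; apply: eq_bigr => c _.
rewrite -big_mkcondr /= sum1_card -cardsE.
by apply: eq_card => x; rewrite !inE eq_sym.
Qed.

Lemma count_gt1P (R : eqType) (s : seq R) (p : pred R) :
  uniq s -> 1 < count p s ->
  exists c1 c2, [/\ c1 \in s, c2 \in s, c1 != c2, p c1 & p c2].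
Proof.
move=> us; rewrite -size_filter; have := filter_uniq p us.
have mem_s c : c \in filter p s -> (c \in s) && p c by rewrite mem_filter andbC.
case: (filter p s) mem_s => [|c1 [|c2 r]] // mem_s /= /andP[c1r _] _.
have /andP[c1s pc1] := mem_s c1 (mem_head _ _).
have /andP[c2s pc2] : (c2 \in s) && p c2 by apply: mem_s; rewrite !inE eqxx orbT.
exists c1, c2; split=> //.
by apply: contraNneq c1r => ->; rewrite mem_head.
Qed.

Lemma split_into_groups (T : finType) (S : {set T}) (k r : nat) :
  #|S| <= k * r ->
  exists h : T -> nat,
    {in S, forall u, h u < r} /\ forall i, #|[set u in S | h u == i]| <= k.
Proof.
have [-> | k_gt0] := posnP k => S_le.
  move: S_le; rewrite mul0n leqn0 cards_eq0 => /eqP->.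
  exists (fun=> 0); split=> [u|i]; first by rewrite inE.
  by rewrite leqn0 cards_eq0; apply/eqP/setP => u; rewrite !inE.
exists (fun u => index u (enum S) %/ k); split=> [u uS|i].
  rewrite ltn_divLR // mulnC; apply: leq_trans S_le.
  by rewrite cardE index_mem mem_enum.
pose rem_k u := Ordinal (ltn_pmod (index u (enum S)) k_gt0).
rewrite -[k in _ <= k]card_ord; apply: (@leq_card_in _ _ rem_k).
move=> u w; rewrite !inE => /andP[uS /eqP ui] /andP[wS /eqP wi] /(congr1 val) /= uw.
apply: (index_inj u (s := enum S)); rewrite ?mem_enum //.
by rewrite (divn_eq (index u _) k) (divn_eq (index w _) k) ui wi uw.
Qed.

Section Multipartite.

Variables (T : finType) (I : eqType) (tg : T -> I).

Definition multipartite_adj : rel T := fun x y => tg x != tg y.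

Local Notation relaxed3 := (relaxed_coloring multipartite_adj 3).

Variables (j : I) (f : T -> nat).
Hypothesis f_rel : relaxed3 f.

Let V := [set x | tg x == j].
Let M := colors_on f V.
Let Bs := [set x | (tg x != j) && (f x \in M)].
Let A c := [set x in V | f x == c].
Let B c := [set x in Bs | f x == c].

Definition single_part_color c := [forall x in B c, forall y in B c, tg x == tg y].

Let uniq_M : uniq M. Proof. exact: undup_uniq. Qed.

Definition recolor c0 (h : T -> nat) x :=
  if tg x == j then c0 else if f x \in M then h x else f x.

Definition admissible_recoloring c0 (h : T -> nat) :=
  [/\ c0 \in M, {in Bs, forall u, h u \in M /\ h u != c0}
    & {in Bs, forall v, #|[set u in Bs | multipartite_adj v u && (h u == h v)]| <= 3}].

Lemma recolor_relaxed c0 h : admissible_recoloring c0 h -> relaxed3 (recolor c0 h).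
Proof.
case=> c0M hM h_rel u; rewrite /recolor.
have outsideV v : tg v != j -> f v \in M -> (v \in Bs) by rewrite inE => -> ->.
case: ifP => uV.
  apply: (leq_trans _ (leq0n 3)); rewrite leqn0 cards_eq0.
  apply/eqP/setP => v; rewrite !inE.
  apply/negbTE; apply/andP => -[uv]; rewrite /multipartite_adj (eqP uV) eq_sym in uv.
  rewrite (negbTE uv); case: ifP => [vM | vM /eqP fv]; last by move: c0M; rewrite -fv vM.
  by have [_ /negbTE->] := hM v (outsideV v uv vM).
case: ifP => uM.
  have uBs := outsideV u (negbT uV) uM; have [huM hu0] := hM u uBs.
  apply: leq_trans (h_rel u uBs); apply/subset_leq_card/subsetP => v; rewrite !inE.
  case/andP=> uv; case: ifP => [_ /eqP hu|vV]; first by rewrite hu eqxx in hu0.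
  case: ifP => [vM -> | vM /eqP fv]; last by move: huM; rewrite -fv vM.
  by rewrite uv.
apply: leq_trans (f_rel u); apply/subset_leq_card/subsetP => v; rewrite !inE.
case/andP=> ->; case: ifP => [_ /eqP fu | vV]; first by rewrite -fu c0M in uM.
case: ifP => // vM /eqP hv.
by have [hvM _] := hM v (outsideV v (negbT vV) vM); move: hvM; rewrite hv uM.
Qed.

Lemma recolor_colors c0 h :
  admissible_recoloring c0 h -> forall x, exists y, recolor c0 h x = f y.
Proof.
case=> /colors_onP[y _ ->] hM _ x; rewrite /recolor.
case: ifP => [_ | xV]; first by exists y.
case: ifP => xM; last by exists x.
have [/colors_onP[z _ ->] _] : h x \in M /\ h x != f y by apply: hM; rewrite inE xV.
by exists z.
Qed.

Lemma card_B_le3 c : c \in M -> #|B c| <= 3.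
Proof.
case/colors_onP=> x; rewrite inE => /eqP xV ->.
apply: leq_trans (f_rel x); apply/subset_leq_card/subsetP => u.
by rewrite !inE /multipartite_adj xV eq_sym => /andP[/andP[-> _] ->].
Qed.

Lemma card_A_le3 c : B c != set0 -> #|A c| <= 3.
Proof.
case/set0Pn=> w; rewrite !inE => /andP[/andP[wV _] /eqP wc].
apply: leq_trans (f_rel w); apply/subset_leq_card/subsetP => u.
by rewrite !inE /multipartite_adj wc => /andP[/eqP-> ->]; rewrite wV.
Qed.

(* Each vertex z of B c sees all of A c and the part of B c outside its own
   part; two vertices of B c in different parts see all of B c between them. *)
Lemma card_AB_two_parts c x y : x \in B c -> y \in B c -> tg x != tg y ->
  2 * #|A c| + #|B c| <= 6.
Proof.
pose X z := [set u in B c | tg z != tg u].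
have seen z : z \in B c -> #|A c| + #|X z| <= 3.
  rewrite !inE => /andP[/andP[zV _] /eqP zc].
  rewrite -cardsUI (_ : A c :&: X z = set0) ?cards0 ?addn0; last first.
    apply/setP => u; rewrite !inE; apply/negbTE/negP.
    by case/andP=> /andP[uV _] /andP[/andP[/andP[uV' _] _] _]; rewrite uV in uV'.
  apply: leq_trans (f_rel z); apply/subset_leq_card/subsetP => u.
  rewrite !inE /multipartite_adj zc.
  by case/orP=> [/andP[/eqP-> ->] | /andP[/andP[_ ->] ->]]; rewrite ?andbT // eq_sym.
move=> xB yB xy; have := seen x xB; have := seen y yB.
have : #|B c| <= #|X x| + #|X y|.
  apply: leq_trans (leq_card_setU _ _); apply/subset_leq_card/subsetP => w wB.
  move: wB; rewrite !inE => -> /=; case: (tg x =P tg w) => [<-|] //.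
  by rewrite eq_sym xy orbT.
lia.
Qed.

Lemma card_AB_le c : c \in M -> B c != set0 ->
  #|A c| + #|B c| <= 4 + 2 * single_part_color c.
Proof.
move=> cM Bc; have B3 := card_B_le3 cM; have A3 := card_A_le3 Bc.
have [_ | ] := boolP (single_part_color c); first by rewrite /=; lia.
case/forallPn=> x; rewrite negb_imply => /andP[xB /forallPn[y]].
rewrite negb_imply => /andP[yB xy].
have : 0 < #|A c|.
  case/colors_onP: cM => z zV ->; rewrite card_gt0; apply/set0Pn.
  by exists z; rewrite inE zV eqxx.
have := card_AB_two_parts xB yB xy; rewrite /=; lia.
Qed.

Lemma card_Bs_le : 6 <= #|V| -> {in M, forall c, B c != set0} ->
  count single_part_color M <= 1 -> #|Bs| <= 4 * (size M).-1.
Proof.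
move=> V6 B_ne single_le1.
have V_fib : #|V| = \sum_(c <- M) #|A c|.
  by apply: card_fibers => // x xV; apply/colors_onP; exists x.
have Bs_fib : #|Bs| = \sum_(c <- M) #|B c|.
  by apply: card_fibers => // x; rewrite inE => /andP[].
have : \sum_(c <- M) (#|A c| + #|B c|) <= \sum_(c <- M) (4 + 2 * single_part_color c).
  by rewrite big_seq_cond [X in _ <= X]big_seq_cond; apply: leq_sum => c /andP[cM _];
    apply: card_AB_le => //; apply: B_ne.
have sum_single : \sum_(c <- M) single_part_color c = count single_part_color M.
  by rewrite -sumn_count sumnE big_map.
rewrite big_split /= -V_fib -Bs_fib big_split /= big_const_seq count_predT.
rewrite iter_addn_0 -big_distrr /= sum_single.
have : 0 < size M.
  by case: (M) V_fib V6 => [|//]; rewrite big_nil => ->.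
lia.
Qed.

Lemma unused_color_admissible c0 : c0 \in M -> B c0 == set0 ->
  admissible_recoloring c0 f.
Proof.
move=> c0M /eqP B0; split=> // [u uBs | v vBs].
  split; first by move: uBs; rewrite inE => /andP[].
  apply/eqP => fu; have : u \in B c0 by rewrite inE uBs fu eqxx.
  by rewrite B0 inE.
apply: leq_trans (f_rel v); apply/subset_leq_card/subsetP => u.
by rewrite !inE => /andP[_ ->].
Qed.

Lemma single_part_color_same_part c x y :
  single_part_color c -> x \in B c -> y \in B c -> tg x = tg y.
Proof. by move=> /forall_inP/(_ x) sc /sc/forall_inP/(_ y) xy /xy/eqP. Qed.

Lemma merge_admissible c1 c2 : c1 \in M -> c2 \in M -> c1 != c2 ->
  single_part_color c1 -> single_part_color c2 ->
  admissible_recoloring c1 (fun u => if f u == c1 then c2 else f u).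
Proof.
move=> c1M c2M c12 single1 single2; set h := fun u => _.
have h_c2 u : (h u == c2) = (f u == c1) || (f u == c2).
  by rewrite /h; case: (f u =P c1) => [_|_]; rewrite ?eqxx.
have other_class c c' v u : single_part_color c -> v \in B c -> u \in Bs ->
    multipartite_adj v u -> (f u == c) || (f u == c') -> u \in B c'.
  move=> sc vB uBs vu /orP[/eqP fu | fu]; last exact/setIdP.
  have uB : u \in B c by apply/setIdP; rewrite fu.
  by rewrite /multipartite_adj (single_part_color_same_part sc vB uB) eqxx in vu.
split=> // [u uBs | v vBs].
  rewrite /h; case: ifP => [_ | fu1]; first by rewrite c2M eq_sym.
  by move: uBs; rewrite inE fu1 => /andP[_ ->].
have [fv12 | fv12] := boolP ((f v == c1) || (f v == c2)).
  have hv : h v = c2 by apply/eqP; rewrite h_c2.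
  case/orP: fv12 => fv.
    apply: leq_trans (card_B_le3 c2M); apply/subset_leq_card/subsetP => u.
    rewrite inE hv h_c2 => /andP[uBs /andP[vu fu]].
    by apply: other_class single1 _ uBs vu fu; apply/setIdP.
  apply: leq_trans (card_B_le3 c1M); apply/subset_leq_card/subsetP => u.
  rewrite inE hv h_c2 orbC => /andP[uBs /andP[vu fu]].
  by apply: other_class single2 _ uBs vu fu; apply/setIdP.
have hv : h v = f v by rewrite /h; case: ifP fv12 => // ->.
apply: leq_trans (f_rel v); apply/subset_leq_card/subsetP => u.
rewrite !inE hv => /andP[_ /andP[-> fu]]; move: fu; rewrite /h.
by case: ifP => // _ /eqP c2v; rewrite c2v eqxx orbT in fv12.
Qed.

Lemma split_admissible c0 : c0 \in M -> #|Bs| <= 4 * (size M).-1 ->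
  exists h, admissible_recoloring c0 h.
Proof.
move=> c0M; rewrite -(size_rem c0M) => Bs_le.
have [h [h_lt h_grp]] := split_into_groups Bs_le.
have uniq_R : uniq (rem c0 M) by exact: rem_uniq.
exists (fun u => nth 0 (rem c0 M) (h u)); split=> // [u uBs | v vBs].
  have := mem_nth 0 (h_lt u uBs); rewrite mem_rem_uniq // inE.
  by case/andP=> ->.
apply: leq_trans (_ : #|[set u in Bs | h u == h v] :\ v| <= 3).
  apply/subset_leq_card/subsetP => u /setIdP[uBs /andP[vu /eqP huv]].
  rewrite in_setD1; apply/andP; split.
    by apply: contraNneq vu => ->; rewrite /multipartite_adj eqxx.
  by apply/setIdP; rewrite -(nth_uniq 0 (h_lt u uBs) (h_lt v vBs) uniq_R) huv.
have := h_grp (h v); rewrite (cardsD1 v) inE vBs eqxx; lia.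
Qed.

Theorem monochromatic_part_recoloring : 6 <= #|V| ->
  exists g, [/\ relaxed3 g, forall x, exists y, g x = f y
              & exists c, {in V, forall x, g x = c}].
Proof.
move=> V6.
suff [c0 [h adm]] : exists c0 h, admissible_recoloring c0 h.
  exists (recolor c0 h); split; [exact: recolor_relaxed | exact: recolor_colors |].
  by exists c0 => x; rewrite inE /recolor => ->.
have [x0 x0V] : exists x, x \in V by apply/set0Pn; rewrite -card_gt0; apply: leq_trans V6.
have c0M : f x0 \in M by apply/colors_onP; exists x0.
have [/hasP[c cM Bc0] | B_ne] := boolP (has (fun c => B c == set0) M).
  by exists c, f; exact: unused_color_admissible.
have [/count_gt1P[//|c1 [c2 [c1M c2M c12 s1 s2]]] | single_le1] :=
  ltnP 1 (count single_part_color M).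
  by eexists; eexists; apply: (merge_admissible c1M c2M c12 s1 s2).
exists (f x0); apply: split_admissible c0M _; apply: card_Bs_le => // c cM.
by apply: contraNN B_ne => Bc0; apply/hasP; exists c.
Qed.

End Multipartite.

Lemma card_part (s : nat) (n : 'I_s -> nat) (j : 'I_s) : #|part n j| = n j.
Proof.
rewrite -[n j]card_ord -(card_imset _ (@eq_from_Tagged _ (fun k => 'I_(n k)) j)).
apply: eq_card => -[k i]; rewrite inE /=.
apply/eqP/imsetP => [kj | [i' _ /(congr1 tag) //]].
by subst k; exists i.
Qed.

Theorem lemma5p1 (s : nat) (n : 'I_s -> nat) :
  2 <= s ->
  (forall j, 0 < n j) ->
  (exists j, 6 <= n j) ->
  exists f : cmp_vertex n -> nat,
    optimal_relaxed (@cmp_adj s n) 3 f /\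
    exists j, 6 <= n j /\ size (colors_on f (part n j)) = 1.
Proof.
move=> _ _ [j n6].
have [f [f_rel f_min]] :=
  @optimal_relaxed_exists _ (@cmp_adj s n) 3 (fun x => negbF (eqxx (tag x))).
have V6 : 6 <= #|[set x : cmp_vertex n | tag x == j]| by rewrite -/(part n j) card_part.
have [g [g_rel g_sub [c g_const]]] := monochromatic_part_recoloring f_rel V6.
exists g; split.
  by split=> // h h_rel; apply: leq_trans (ncolors_le g_sub) (f_min h h_rel).
exists j; split=> //; apply: size_colors_on_const g_const.
by rewrite -card_gt0 card_part; apply: leq_trans n6.
Qed.
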